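(* On $\mathcal H=\mathbb C^2$ with orthonormal basis $|0\rangle,|1\rangle$, let $P_1=\frac12|0\rangle\langle0|$ and $P_2=\frac12|0\rangle\langle0|+|1\rangle\langle1|$. The POVM $\{P_1,P_2\}$ is not extremal, while the instrument $\mathcal N_i(\rho)=\sqrt{P_i}\,\rho\,\sqrt{P_i}$, $i=1,2$, is an extremal instrument.
   Context: A POVM is a family of positive operators summing to the identity; an extremal POVM is an extreme point of the convex set of POVMs with the same number of outcomes. An instrument with $M$ outcomes is a family of completely positive maps $\mathcal N_i:\mathcal L(\mathcal H)\to\mathcal L(\mathcal H)$ whose sum is trace preserving; extremal means an extreme point of the convex set of all such instruments with $M$ outcomes. *)

From HB Require Import structures.
From mathcomp Require Import all_boot all_order all_algebra all_field.
Set Implicit Arguments. Unset Strict Implicit. Unset Printing Implicit Defensive.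
Import Order.TTheory GRing.Theory Num.Theory.
Local Open Scope ring_scope.

Definition adj (m n : nat) (A : 'M[algC]_(m, n)) : 'M[algC]_(n, m) :=
  (map_mx Num.conj A)^T.

(* positive (semidefinite) operator on C^n; in algC, 0 <= z means z is real nonnegative *)
Definition psd (n : nat) (A : 'M[algC]_n) : Prop :=
  A = adj A /\ forall v : 'cV[algC]_n, 0 <= (adj v *m A *m v) 0 0.

(* positivity of an element of M_k (x) M_n, given as a k x k array of n x n blocks *)
Definition block_psd (k n : nat) (X : 'I_k -> 'I_k -> 'M[algC]_n) : Prop :=
  (forall i j, X j i = adj (X i j)) /\
  forall v : 'I_k -> 'cV[algC]_n,
    0 <= \sum_(i < k) \sum_(j < k) (adj (v i) *m X i j *m v j) 0 0.

Definition linmap (n : nat) (f : 'M[algC]_n -> 'M[algC]_n) : Prop :=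
  forall (a : algC) (X Y : 'M[algC]_n), f (a *: X + Y) = a *: f X + f Y.

Definition CP (n : nat) (f : 'M[algC]_n -> 'M[algC]_n) : Prop :=
  forall (k : nat) (X : 'I_k -> 'I_k -> 'M[algC]_n),
    block_psd X -> block_psd (fun i j => f (X i j)).

Definition POVM (n M : nat) (P : 'I_M -> 'M[algC]_n) : Prop :=
  (forall i, psd (P i)) /\ \sum_(i < M) P i = 1%:M.

Definition extremal_POVM (n M : nat) (P : 'I_M -> 'M[algC]_n) : Prop :=
  POVM P /\
  forall (Q R : 'I_M -> 'M[algC]_n) (t : algC),
    POVM Q -> POVM R -> 0 < t -> t < 1 ->
    (forall i, P i = t *: Q i + (1 - t) *: R i) ->
    forall i, Q i = P i /\ R i = P i.

Definition instrument (n M : nat) (N : 'I_M -> 'M[algC]_n -> 'M[algC]_n) : Prop :=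
  (forall i, linmap (N i) /\ CP (N i)) /\
  forall rho : 'M[algC]_n, \tr (\sum_(i < M) N i rho) = \tr rho.

Definition extremal_instrument (n M : nat)
    (N : 'I_M -> 'M[algC]_n -> 'M[algC]_n) : Prop :=
  instrument N /\
  forall (A B : 'I_M -> 'M[algC]_n -> 'M[algC]_n) (t : algC),
    instrument A -> instrument B -> 0 < t -> t < 1 ->
    (forall i rho, N i rho = t *: A i rho + (1 - t) *: B i rho) ->
    forall i rho, A i rho = N i rho /\ B i rho = N i rho.

Definition proj2 (j : 'I_2) : 'M[algC]_2 := delta_mx j j.
Definition P1 : 'M[algC]_2 := (1/2) *: proj2 ord0.
Definition P2 : 'M[algC]_2 := (1/2) *: proj2 ord0 + proj2 ord_max.
Definition Pfam (i : 'I_2) : 'M[algC]_2 := if i == ord0 then P1 else P2.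

(* A convex decomposition [S rho S = t A(rho) + (1 - t) B(rho)] with [A], [B]
   completely positive makes the Choi form of [A] a positive form dominated by
   the rank-one Choi form [(tr (S X))^* tr (S Y)] of [rho |-> S rho S]; by
   Cauchy-Schwarz a positive form vanishing on the kernel of a functional is a
   multiple of it, so [A_i = mu_i S_i rho S_i].  Trace preservation then gives
   [mu_1 P1 + mu_2 P2 = 1], which forces [mu_1 = mu_2 = 1].  The POVM, on the
   other hand, is the midpoint of [(|0><0|, |1><1|)] and [(0, 1)]. *)

From HB Require Import structures.
From mathcomp Require Import all_boot all_order all_algebra all_field.
From mathcomp Require Import ring.
Set Implicit Arguments. Unset Strict Implicit. Unset Printing Implicit Defensive.
Import Order.TTheory GRing.Theory Num.Theory.
Local Open Scope ring_scope.

Lemma real_affine_ge0_slope0 (b a : algC) :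
  (forall r, r \is Num.real -> 0 <= b + r * a) -> a = 0.
Proof.
move=> ge0; have b_ge0 : 0 <= b by have := ge0 0 (rpred0 _); rewrite mul0r addr0.
have a_real : a \is Num.real.
  have := ge0 1 (rpred1 _); rewrite mul1r => ba_ge0.
  by rewrite -(addKr b a) rpredD ?rpredN ?ger0_real.
apply/eqP/negPn/negP => a_neq0.
have r_real : - (b + 1) / a \is Num.real.
  by rewrite rpredM ?rpredV // rpredN rpredD ?rpred1 ?ger0_real.
by have := ge0 _ r_real; rewrite divfK // opprD addrA subrr add0r ler0N1.
Qed.

Section PsdSesquilinearForm.

Variables (V : lmodType algC) (h : V -> V -> algC).
Hypothesis hZDl : forall a x y z, h (a *: x + y) z = a^* * h x z + h y z.
Hypothesis hZDr : forall a x y z, h x (a *: y + z) = a * h x y + h x z.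
Hypothesis h_ge0 : forall x, 0 <= h x x.

(* Cauchy-Schwarz in its degenerate case: expand [0 <= h (y + l k) (y + l k)]
   for real [l] and for [l] in [i R]. *)
Lemma psd_form_isotropic (k : V) : h k k = 0 -> forall y, h y k = 0 /\ h k y = 0.
Proof.
move=> hkk y.
have expand l : 0 <= h y y + l * h y k + l^* * h k y.
  have := h_ge0 (l *: k + y); rewrite hZDl !hZDr hkk.
  by congr (0 <= _); ring.
have sum0 : h y k + h k y = 0.
  apply: (@real_affine_ge0_slope0 (h y y)) => r r_real.
  by have := expand r; rewrite (conj_Creal r_real); congr (0 <= _); ring.
have diff0 : 'i * (h y k - h k y) = 0.
  apply: (@real_affine_ge0_slope0 (h y y)) => r r_real.
  have := expand ('i * r); rewrite rmorphM /= conjCi (conj_Creal r_real).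
  by congr (0 <= _); ring.
move/eqP: diff0; rewrite mulf_eq0 (negbTE (neq0Ci _)) subr_eq0 => /eqP hyk_hky.
move: sum0; rewrite hyk_hky -mulr2n -mulr_natl => /eqP.
by rewrite mulf_eq0 pnatr_eq0 /= => /eqP ->.
Qed.

Lemma psd_form_rank_one (phi : V -> algC) (e : V) :
  (forall a x y, phi (a *: x + y) = a * phi x + phi y) -> phi e != 0 ->
  (forall k, phi k = 0 -> h k k = 0) ->
  exists mu, forall x y, h x y = mu * ((phi x)^* * phi y).
Proof.
move=> phiZD phi_e kernel_isotropic.
pose c x := phi x / phi e.
have decompose x : x = c x *: e + ((- c x) *: e + x).
  by rewrite addrA -scalerDl subrr scale0r add0r.
have in_kernel x : phi ((- c x) *: e + x) = 0.
  by rewrite phiZD mulNr divfK // addNr.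
have isotropic x := psd_form_isotropic (kernel_isotropic _ (in_kernel x)).
have left_factor x y : h x y = (c x)^* * h e y.
  by rewrite {1}(decompose x) hZDl (isotropic x y).2 addr0.
have right_factor y : h e y = c y * h e e.
  by rewrite {1}(decompose y) hZDr (isotropic y e).1 addr0.
exists (h e e / ((phi e)^* * phi e)) => x y.
rewrite left_factor right_factor /c rmorphM fmorphV /=.
by field; rewrite conjC_eq0 phi_e.
Qed.

End PsdSesquilinearForm.

Lemma adjZD m n a (A B : 'M[algC]_(m, n)) : adj (a *: A + B) = a^* *: adj A + adj B.
Proof. by apply/matrixP => i j; rewrite !mxE rmorphD rmorphM. Qed.

Lemma adj0 m n : adj (0 : 'M[algC]_(m, n)) = 0.
Proof. by rewrite /adj map_mx0 trmx0. Qed.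

Lemma adjM m n p (A : 'M[algC]_(m, n)) (B : 'M[algC]_(n, p)) :
  adj (A *m B) = adj B *m adj A.
Proof.
apply/matrixP => i j; rewrite !mxE rmorph_sum; apply: eq_bigr => k _.
by rewrite !mxE rmorphM mulrC.
Qed.

Lemma adj_delta m n (i : 'I_m) (j : 'I_n) : adj (delta_mx i j) = delta_mx j i.
Proof. by rewrite /adj map_delta_mx trmx_delta. Qed.

Lemma mul_delta_mx_entry m n p (A : 'M[algC]_(m, n)) (B : 'M[algC]_(n, p)) i j r s :
  (A *m delta_mx i j *m B) r s = A r i * B j s.
Proof.
rewrite -(mul_delta_mx (0 : 'I_1)) mulmxA -colE -mulmxA -rowE.
by rewrite !mxE big_ord1 !mxE.
Qed.

Lemma col_delta m n (k : 'I_n) (p : 'I_m) (i : 'I_n) :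
  col k (delta_mx p i : 'M[algC]_(m, n)) = delta_mx p 0 *+ (k == i).
Proof.
apply/matrixP => r s; rewrite ord1 [LHS]mxE [LHS]mxE.
by case: (k == i); rewrite ?mulr1n ?mulr0n !mxE ?andbF ?andbT ?eqxx.
Qed.

Lemma double_sum_conj_mul n (a b : 'I_n -> algC) :
  \sum_i \sum_j (a i)^* * b j = (\sum_i a i)^* * \sum_j b j.
Proof. by rewrite rmorph_sum mulr_suml; under eq_bigr do rewrite -mulr_sumr. Qed.

Lemma delta_block_psd n : block_psd (fun i j : 'I_n => delta_mx i j : 'M[algC]_n).
Proof.
split=> [i j | v]; first by rewrite adj_delta.
under eq_bigr do under eq_bigr do rewrite mul_delta_mx_entry !mxE.
by rewrite double_sum_conj_mul mulrC mul_conjC_ge0.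
Qed.

(* The pairing of the Choi matrix [(f (delta_mx i j))_(i,j)] of [f] with the
   block vectors whose blocks are the columns of [X] and [Y]. *)
Definition choi_form n (f : 'M[algC]_n -> 'M[algC]_n) (X Y : 'M[algC]_n) : algC :=
  \sum_i \sum_j (adj (col i X) *m f (delta_mx i j) *m col j Y) 0 0.

Section ChoiForm.

Variables (n : nat) (f : 'M[algC]_n -> 'M[algC]_n).

Lemma choi_formZDl a X Y Z :
  choi_form f (a *: X + Y) Z = a^* * choi_form f X Z + choi_form f Y Z.
Proof.
rewrite /choi_form mulr_sumr -big_split; apply: eq_bigr => i _.
rewrite mulr_sumr -big_split; apply: eq_bigr => j _ /=.
by rewrite linearP adjZD !mulmxDl -!scalemxAl !mxE.
Qed.

Lemma choi_formZDr a X Y Z :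
  choi_form f X (a *: Y + Z) = a * choi_form f X Y + choi_form f X Z.
Proof.
rewrite /choi_form mulr_sumr -big_split; apply: eq_bigr => i _.
rewrite mulr_sumr -big_split; apply: eq_bigr => j _ /=.
by rewrite linearP mulmxDr -scalemxAr !mxE.
Qed.

Lemma choi_form_delta p q i j :
  choi_form f (delta_mx p i) (delta_mx q j) = f (delta_mx i j) p q.
Proof.
rewrite /choi_form (bigD1 i) //= [X in _ + X]big1 ?addr0 => [|k ki]; last first.
  by apply: big1 => l _; rewrite col_delta (negbTE ki) mulr0n adj0 !mul0mx mxE.
rewrite (bigD1 j) //= [X in _ + X]big1 ?addr0 => [|l lj]; last first.
  by rewrite [col l _]col_delta (negbTE lj) mulr0n mulmx0 mxE.
by rewrite !col_delta !eqxx !mulr1n adj_delta -rowE -colE !mxE.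
Qed.

Lemma choi_form_ge0 X : CP f -> 0 <= choi_form f X X.
Proof. by move=> cp_f; exact: (cp_f n _ (delta_block_psd n)).2 (fun i => col i X). Qed.

End ChoiForm.

Lemma choi_form_conj n (S X Y : 'M[algC]_n) : S = adj S ->
  choi_form (fun rho => S *m rho *m S) X Y = (\tr (S *m X))^* * \tr (S *m Y).
Proof.
move=> S_herm; rewrite -double_sum_conj_mul.
apply: eq_bigr => i _; apply: eq_bigr => j _.
rewrite !mulmxA -(mulmxA _ S) mul_delta_mx_entry {1}S_herm -adjM.
by rewrite !colE !mulmxA -!colE !mxE.
Qed.

Lemma mxtrace_mul_delta n (A : 'M[algC]_n) i j : \tr (A *m delta_mx i j) = A j i.
Proof.
rewrite /mxtrace (bigD1 j) //= big1 ?addr0 => [|k /negbTE kj].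
  by rewrite -(mul_delta_mx (0 : 'I_1)) mulmxA -colE mxE big_ord1 !mxE eqxx mulr1.
by rewrite -(mul_delta_mx (0 : 'I_1)) mulmxA -colE mxE big_ord1 !mxE kj mulr0.
Qed.

Lemma mxtrace_sum n (I : Type) (r : seq I) (F : I -> 'M[algC]_n) :
  \tr (\sum_(i <- r) F i) = \sum_(i <- r) \tr (F i).
Proof. exact: raddf_sum. Qed.

Lemma mxtrace_conj n (S rho : 'M[algC]_n) : \tr (S *m rho *m S) = \tr (S *m S *m rho).
Proof. by rewrite mxtrace_mulC mulmxA. Qed.

Lemma mx_eq1_of_trace n (A : 'M[algC]_n) : (forall rho, \tr (A *m rho) = \tr rho) -> A = 1%:M.
Proof.
move=> trA; apply/matrixP => i j.
by have := trA (delta_mx j i); rewrite -{2}[delta_mx j i]mul1mx !mxtrace_mul_delta.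
Qed.

Lemma linmap_sum_delta n (f : 'M[algC]_n -> 'M[algC]_n) rho : linmap f ->
  f rho = \sum_i \sum_j rho i j *: f (delta_mx i j).
Proof.
move=> lin_f.
have f0 : f 0 = 0.
  by have := lin_f 1 0 0; rewrite !scale1r addr0 -{1}[f 0]addr0 => /addrI /esym.
have fD : {morph f : x y / x + y}.
  by move=> x y; have := lin_f 1 x y; rewrite !scale1r.
have fZ a x : f (a *: x) = a *: f x by rewrite -[a *: x]addr0 lin_f f0 addr0.
rewrite {1}(matrix_sum_delta rho) (big_morph f fD f0); apply: eq_bigr => i _.
by rewrite (big_morph f fD f0); apply: eq_bigr => j _; rewrite fZ.
Qed.

Lemma linmap_conj n (S : 'M[algC]_n) : linmap (fun rho => S *m rho *m S).
Proof. by move=> a X Y; rewrite mulmxDr mulmxDl -scalemxAr -scalemxAl. Qed.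

Lemma CP_conj n (S : 'M[algC]_n) : S = adj S -> CP (fun rho => S *m rho *m S).
Proof.
move=> S_herm k X [X_herm X_ge0]; split=> [i j | v].
  by rewrite !adjM -S_herm -X_herm mulmxA.
have := X_ge0 (fun i => S *m v i); congr (0 <= _).
apply: eq_bigr => i _; apply: eq_bigr => j _.
by rewrite adjM -S_herm !mulmxA.
Qed.

(* [rho |-> S rho S] spans an extreme ray of the cone of completely positive
   maps: its Choi form is the rank-one form [(tr (S X))^* tr (S Y)]. *)
Lemma conj_map_extreme_ray n (S : 'M[algC]_n) (f g : 'M[algC]_n -> 'M[algC]_n) t :
  S = adj S -> S != 0 -> linmap f -> CP f -> CP g -> 0 < t -> t < 1 ->
  (forall rho, S *m rho *m S = t *: f rho + (1 - t) *: g rho) ->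
  exists mu, forall rho, f rho = mu *: (S *m rho *m S).
Proof.
move=> S_herm S_neq0 lin_f cp_f cp_g t_gt0 t_lt1 decomp.
have mix X Y :
    t * choi_form f X Y + (1 - t) * choi_form g X Y = (\tr (S *m X))^* * \tr (S *m Y).
  rewrite -choi_form_conj // /choi_form !mulr_sumr -big_split.
  apply: eq_bigr => i _; rewrite !mulr_sumr -big_split; apply: eq_bigr => j _ /=.
  by rewrite decomp mulmxDr mulmxDl -!scalemxAr -!scalemxAl !mxE.
have trZD a X Y : \tr (S *m (a *: X + Y)) = a * \tr (S *m X) + \tr (S *m Y).
  by rewrite mulmxDr -scalemxAr mxtraceD mxtraceZ.
have [p [i Spi]] := matrix0Pn _ S_neq0.
have tr_neq0 : \tr (S *m delta_mx i p) != 0 by rewrite mxtrace_mul_delta.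
have kernel_isotropic K : \tr (S *m K) = 0 -> choi_form f K K = 0.
  move=> trK; have /eqP := mix K K; rewrite trK mulr0 paddr_eq0; last 2 first.
  - by rewrite mulr_ge0 ?(ltW t_gt0) ?choi_form_ge0.
  - by rewrite mulr_ge0 ?subr_ge0 ?(ltW t_lt1) ?choi_form_ge0.
  by rewrite mulf_eq0 gt_eqF //= => /andP[/eqP].
have [mu choi_f] := psd_form_rank_one (choi_formZDl f) (choi_formZDr f)
  (fun X => choi_form_ge0 X cp_f) trZD tr_neq0 kernel_isotropic.
exists mu => rho; rewrite (linmap_sum_delta rho lin_f).
rewrite (linmap_sum_delta rho (linmap_conj S)) scaler_sumr; apply: eq_bigr => r _.
rewrite scaler_sumr; apply: eq_bigr => s _; rewrite scalerA mulrC -scalerA.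
congr (_ *: _); apply/matrixP => a b.
by rewrite -choi_form_delta choi_f -choi_form_conj // choi_form_delta [RHS]mxE.
Qed.

Section ConjugationInstrument.

Variables (n M : nat) (S : 'I_M -> 'M[algC]_n).
Hypothesis S_herm : forall i, S i = adj (S i).
Hypothesis S_neq0 : forall i, S i != 0.
Hypothesis sum_sqr_S : \sum_i S i *m S i = 1%:M.
Hypothesis sum_sqr_S_unique :
  forall mu : 'I_M -> algC, \sum_i mu i *: (S i *m S i) = 1%:M -> forall i, mu i = 1.

Lemma conj_instrument : instrument (fun i rho => S i *m rho *m S i).
Proof.
split=> [i | rho]; first by split; [exact: linmap_conj | exact: CP_conj].
rewrite mxtrace_sum; under eq_bigr do rewrite mxtrace_conj.
by rewrite -mxtrace_sum -mulmx_suml sum_sqr_S mul1mx.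
Qed.

Lemma conj_instrument_component_eq (A B : 'I_M -> 'M[algC]_n -> 'M[algC]_n) t :
  instrument A -> instrument B -> 0 < t -> t < 1 ->
  (forall i rho, S i *m rho *m S i = t *: A i rho + (1 - t) *: B i rho) ->
  forall i rho, A i rho = S i *m rho *m S i.
Proof.
move=> [A_lin_CP A_tr] [B_lin_CP _] t_gt0 t_lt1 decomp.
have /fin_all_exists [mu A_eq] i : exists mu, forall rho, A i rho = mu *: (S i *m rho *m S i).
  by apply: conj_map_extreme_ray (S_herm i) (S_neq0 i) (A_lin_CP i).1 (A_lin_CP i).2
    (B_lin_CP i).2 t_gt0 t_lt1 (decomp i).
have mu_eq1 : forall i, mu i = 1.
  apply: sum_sqr_S_unique; apply: mx_eq1_of_trace => rho.
  rewrite -[RHS]A_tr mulmx_suml !mxtrace_sum; apply: eq_bigr => i _.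
  by rewrite A_eq -scalemxAl !mxtraceZ mxtrace_conj.
by move=> i rho; rewrite A_eq mu_eq1 scale1r.
Qed.

Lemma conj_instrument_extremal : extremal_instrument (fun i rho => S i *m rho *m S i).
Proof.
split=> [|A B t inst_A inst_B t_gt0 t_lt1 decomp i rho]; first exact: conj_instrument.
split; first exact: conj_instrument_component_eq inst_A inst_B t_gt0 t_lt1 decomp i rho.
have s_gt0 : 0 < 1 - t by rewrite subr_gt0.
have s_lt1 : 1 - t < 1 by rewrite ltrBlDr ltrDl.
apply: conj_instrument_component_eq inst_B inst_A s_gt0 s_lt1 _ i rho => j r.
by rewrite decomp addrC subKr.
Qed.

End ConjugationInstrument.

Lemma sum_ord2 (V : nmodType) (F : 'I_2 -> V) : \sum_i F i = F ord0 + F ord_max.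
Proof. by rewrite big_ord_recl big_ord1; congr (_ + F _); apply: val_inj. Qed.

Lemma ord2P (i : 'I_2) : i = ord0 \/ i = ord_max.
Proof. by case: i => [[|[|//]] i_lt2]; [left | right]; apply: val_inj. Qed.

Definition diag2 (a b : algC) : 'M[algC]_2 :=
  a *: delta_mx ord0 ord0 + b *: delta_mx ord_max ord_max.

Lemma diag2_00 : diag2 0 0 = 0.
Proof. by rewrite /diag2 !scale0r addr0. Qed.

Lemma diag2D a b c d : diag2 a b + diag2 c d = diag2 (a + c) (b + d).
Proof. by rewrite /diag2 addrACA -!scalerDl. Qed.

Lemma diag2Z k a b : k *: diag2 a b = diag2 (k * a) (k * b).
Proof. by rewrite /diag2 scalerDr !scalerA. Qed.

Lemma diag2M a b c d : diag2 a b *m diag2 c d = diag2 (a * c) (b * d).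
Proof.
rewrite /diag2 mulmxDl !mulmxDr -!scalemxAl -!scalemxAr !scalerA !mul_delta_mx.
by rewrite !mul_delta_mx_0 // !scaler0 addr0 add0r.
Qed.

Lemma diag2_11 : diag2 1 1 = 1%:M.
Proof. by rewrite /diag2 !scale1r mx1_sum_delta sum_ord2. Qed.

Lemma diag2_inj a b c d : diag2 a b = diag2 c d -> a = c /\ b = d.
Proof.
move=> eq_diag; have := congr1 (fun A : 'M_2 => A ord0 ord0) eq_diag.
have := congr1 (fun A : 'M_2 => A ord_max ord_max) eq_diag.
by rewrite /= !mxE /= !mulr1 !mulr0 !addr0 !add0r => -> ->.
Qed.

Lemma psd_diag2 a b : 0 <= a -> 0 <= b -> psd (diag2 a b).
Proof.
move=> a_ge0 b_ge0; split.
  by rewrite /diag2 -[b *: _]addr0 !adjZD adj0 !adj_delta !geC0_conj ?addr0.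
move=> v; rewrite /diag2 mulmxDr mulmxDl -!scalemxAr -!scalemxAl.
rewrite mxE [X in _ + X]mxE [X in X + _]mxE !mul_delta_mx_entry !mxE.
by rewrite addr_ge0 // mulr_ge0 // mulrC mul_conjC_ge0.
Qed.

Lemma P1E : P1 = diag2 (1 / 2) 0.
Proof. by rewrite /P1 /diag2 /proj2 scale0r addr0. Qed.

Lemma P2E : P2 = diag2 (1 / 2) 1.
Proof. by rewrite /P2 /diag2 /proj2 scale1r. Qed.

Lemma half_gt0 : (0 : algC) < 1 / 2.
Proof. by rewrite mul1r invr_gt0 ltr0n. Qed.

Lemma half_lt1 : (1 / 2 : algC) < 1.
Proof. by rewrite ltr_pdivrMr ?ltr0n // mul1r ltr1n. Qed.

Lemma Pfam_not_extremal : ~ extremal_POVM Pfam.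
Proof.
case=> _ extremal.
pose Q (i : 'I_2) := if i == ord0 then diag2 1 0 else diag2 0 1.
pose R (i : 'I_2) := if i == ord0 then diag2 0 0 else diag2 1 1.
have povm_Q : POVM Q.
  split=> [i | ]; first by rewrite /Q; case: ifP => _; apply: psd_diag2.
  by rewrite sum_ord2 /Q /= diag2D add0r addr0 diag2_11.
have povm_R : POVM R.
  split=> [i | ]; first by rewrite /R; case: ifP => _; apply: psd_diag2.
  by rewrite sum_ord2 /R /= diag2D !add0r diag2_11.
have midpoint i : Pfam i = 1 / 2 *: Q i + (1 - 1 / 2) *: R i.
  rewrite /Pfam /Q /R P1E P2E; case: (ord2P i) => -> /=;
    by rewrite !diag2Z diag2D; congr diag2; field.
have [Q0_eq _] := extremal Q R (1 / 2) povm_Q povm_R half_gt0 half_lt1 midpoint ord0.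
move: Q0_eq; rewrite /Q /Pfam /= P1E => /diag2_inj[one_eq_half _].
by move: half_lt1; rewrite -one_eq_half ltxx.
Qed.

Lemma P1_P2_psd_sqrt :
  exists S1 S2 : 'M[algC]_2, psd S1 /\ psd S2 /\ S1 *m S1 = P1 /\ S2 *m S2 = P2.
Proof.
have s_ge0 : 0 <= sqrtC (1 / 2 : algC) by rewrite sqrtC_ge0 mul1r invr_ge0 ler0n.
exists (diag2 (sqrtC (1 / 2)) 0), (diag2 (sqrtC (1 / 2)) 1).
rewrite !diag2M -expr2 sqrtCK mulr0 mulr1 P1E P2E.
split; first exact: psd_diag2 s_ge0 (lexx 0).
by split; first exact: psd_diag2 s_ge0 ler01.
Qed.

Lemma P1_P2_sum_unique mu0 mu1 :
  mu0 *: P1 + mu1 *: P2 = 1%:M -> mu0 = 1 /\ mu1 = 1.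
Proof.
rewrite P1E P2E !diag2Z diag2D -diag2_11 mulr0 add0r mulr1.
move=> /diag2_inj[eq0 mu1_eq1]; split=> //.
have -> : mu0 = 2 * (mu0 * (1 / 2) + mu1 * (1 / 2)) - 1 by rewrite mu1_eq1; field.
by rewrite eq0; ring.
Qed.

Theorem mainTheorem18 :
  ~ extremal_POVM Pfam /\
  (exists S1 S2 : 'M[algC]_2, psd S1 /\ psd S2 /\ S1 *m S1 = P1 /\ S2 *m S2 = P2) /\
  (forall S1 S2 : 'M[algC]_2,
     psd S1 -> psd S2 -> S1 *m S1 = P1 -> S2 *m S2 = P2 ->
     extremal_instrument
       (fun (i : 'I_2) (rho : 'M[algC]_2) =>
          let S := if i == ord0 then S1 else S2 in S *m rho *m S)).
Proof.
split; first exact: Pfam_not_extremal.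
split; first exact: P1_P2_psd_sqrt.
move=> S1 S2 [S1_herm _] [S2_herm _] sqr_S1 sqr_S2.
pose S (i : 'I_2) := if i == ord0 then S1 else S2.
have sqr_S i : S i *m S i = Pfam i by rewrite /S /Pfam; case: ifP.
have Pfam_neq0 i : Pfam i != 0.
  rewrite /Pfam P1E P2E -diag2_00; case: ifP => _; apply/eqP => /diag2_inj[half_eq0 _];
    by move: half_gt0; rewrite half_eq0 ltxx.
apply: (@conj_instrument_extremal _ _ S).
- by move=> i; rewrite /S; case: ifP.
- by move=> i; apply: contraNneq (Pfam_neq0 i) => S0; rewrite -sqr_S S0 mul0mx.
- by rewrite sum_ord2 !sqr_S /Pfam /= P1E P2E diag2D add0r -splitr diag2_11.
- move=> mu; rewrite sum_ord2 !sqr_S /Pfam /= => /P1_P2_sum_unique[mu0 mu1] i.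
  by case: (ord2P i) => ->.
Qed.
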